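(* Let $R$ be an associative unital division ring over a field of characteristic $0$, equipped with two commuting derivations $\partial_x,\partial_y$ (written $F_x=\partial_x F$, $F_y=\partial_y F$). Let $\varphi\in R$ and for $n\geq1$ put $$\Theta_n=\bigl(\partial_x^{\,i-1}\partial_y^{\,j-1}\varphi\bigr)_{1\leq i,j\leq n},\qquad \theta_n=|\Theta_n|_{nn},$$ with the convention $\theta_0^{-1}:=0$, and assume all quasideterminants involved are defined and all $\theta_n$ are invertible. Then for all $n\geq1$, $$\bigl(\theta_{n,x}\theta_n^{-1}\bigr)_y=\theta_{n+1}\theta_n^{-1}-\theta_n\theta_{n-1}^{-1}.$$
   Context: A derivation of $R$ is an $F$-linear map $\partial:R\to R$ vanishing on $F$ and satisfying $\partial(FG)=\partial(F)G+F\partial(G)$. For an $n\times n$ matrix $X$ over $R$, the quasideterminant is $|X|_{ij}=x_{ij}-r_i^j(X^{ij})^{-1}c_j^i$, where $X^{ij}$ is $X$ with row $i$ and column $j$ deleted, $r_i^j$ is row $i$ without its $j$-th entry, $c_j^i$ is column $j$ without its $i$-th entry; $|X|_{11}=x_{11}$ for $n=1$. *)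

From HB Require Import structures.
From mathcomp Require Import all_boot all_order all_algebra.

Set Implicit Arguments.
Unset Strict Implicit.
Unset Printing Implicit Defensive.

Import GRing.Theory.
Local Open Scope ring_scope.

Definition division_ring (R : unitRingType) : Prop :=
  forall x : R, x != 0 -> x \is a GRing.unit.

Definition is_derivation (F : fieldType) (R : unitAlgType F) (d : R -> R) : Prop :=
  [/\ forall (a : F) (u v : R), d (a *: u + v) = a *: d u + d v,
      forall a : F, d (a%:A) = 0
    & forall u v : R, d (u * v) = d u * v + u * d v].

Definition mx_inverse (R : pzRingType) (n : nat) (A B : 'M[R]_n) : Prop :=
  A *m B = 1%:M /\ B *m A = 1%:M.

Definition qminor (R : pzRingType) (n : nat) (X : 'M[R]_n.+1) (i j : 'I_n.+1)
  : 'M[R]_n := \matrix_(k, l) X (lift i k) (lift j l).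

Definition qrow (R : pzRingType) (n : nat) (X : 'M[R]_n.+1) (i j : 'I_n.+1)
  : 'rV[R]_n := \row_l X i (lift j l).

Definition qcol (R : pzRingType) (n : nat) (X : 'M[R]_n.+1) (i j : 'I_n.+1)
  : 'cV[R]_n := \col_k X (lift i k) j.

(* For a 1x1 matrix the minor is 0x0, hence trivially invertible, and the
   correction term is the empty sum, so |X|_{11} = x_11. *)
Definition is_qdet (R : pzRingType) (n : nat) (X : 'M[R]_n.+1) (i j : 'I_n.+1)
  (q : R) : Prop :=
  exists Y : 'M[R]_n, mx_inverse (qminor X i j) Y /\
    q = X i j - (qrow X i j *m Y *m qcol X i j) 0 0.

(* Theta_{m+1} = (dx^(i) dy^(j) phi)_{0 <= i,j <= m}, an (m+1)x(m+1) matrix. *)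
Definition Theta (R : pzRingType) (dx dy : R -> R) (phi : R) (m : nat)
  : 'M[R]_m.+1 := \matrix_(i, j) iter i dx (iter j dy phi).

From HB Require Import structures.
From mathcomp Require Import all_boot all_order all_algebra.
Set Implicit Arguments.
Unset Strict Implicit.
Unset Printing Implicit Defensive.
Import GRing.Theory.
Local Open Scope ring_scope.

(* Write P i j for the (i, j) entry, M for the leading m x m block and
   b = (P m l)_l M^-1 for the coefficient row, so that b M = (P m l)_l and
   theta_m = P m m - b (P k m)_k.  If a row (h_0, ..., h_m) kills the first m
   columns of the (m+1) x (m+1) block, then (h_0, ..., h_(m-1)) = - h_m b, so
   its product with the last column is h_m theta_m.  Differentiating
   b M = (P m l)_l in y (which shifts columns) and in x (which shifts rows)
   produces such rows; this gives dy b'_m theta_m = theta_(m+1) and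
   dx theta_m = (b'_m - b_(m-1)) theta_m, where b' is the coefficient row of
   the next size.  Hence dx theta_m theta_m^-1 = b'_m - b_(m-1), and the
   first identity at m and at m - 1 computes its y-derivative. *)

Section Derivation.

Variables (R : pzRingType) (d : R -> R).
Hypothesis dD : {morph d : u v / u + v}.
Hypothesis dM : forall u v, d (u * v) = d u * v + u * d v.

Lemma derivation0 : d 0 = 0.
Proof. by apply: (addrI (d 0)); rewrite -dD !addr0. Qed.

Lemma derivationB u v : d (u - v) = d u - d v.
Proof. by apply/eqP; rewrite eq_sym subr_eq -dD subrK. Qed.

Lemma derivation_sum I (r : seq I) (Q : pred I) (G : I -> R) :
  d (\sum_(i <- r | Q i) G i) = \sum_(i <- r | Q i) d (G i).
Proof. exact: (big_morph d dD derivation0). Qed.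

Lemma derivation_sum_mul n (a b : nat -> R) :
  d (\sum_(k < n) a k * b k) =
    \sum_(k < n) d (a k) * b k + \sum_(k < n) a k * d (b k).
Proof.
by rewrite derivation_sum -big_split; apply: eq_bigr => k _; rewrite dM.
Qed.

End Derivation.

Lemma is_derivationD (F : fieldType) (R : unitAlgType F) (d : R -> R) :
  is_derivation d -> {morph d : u v / u + v}.
Proof. by case=> dlin _ _ u v; rewrite -[u]scale1r dlin !scale1r. Qed.

Lemma is_derivationM (F : fieldType) (R : unitAlgType F) (d : R -> R) :
  is_derivation d -> forall u v, d (u * v) = d u * v + u * d v.
Proof. by case. Qed.

Section CornerQuasideterminant.

Variable R : pzRingType.
Implicit Types P : nat -> nat -> R.

Definition lead_mx P m : 'M[R]_m := \matrix_(k < m, l < m) P k l.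

(* The coefficient row b = (P m l)_l Y, extended by 0 from index m on. *)
Definition corner_coef P m (Y : 'M[R]_m) (k : nat) : R :=
  oapp (fun k' : 'I_m => \sum_(l < m) P m l * Y l k') 0 (insub k).

Definition corner_qdet P m (Y : 'M[R]_m) : R :=
  P m m - \sum_(k < m) corner_coef P Y k * P k m.

Lemma corner_coefE P m (Y : 'M[R]_m) (k : 'I_m) :
  corner_coef P Y k = \sum_(l < m) P m l * Y l k.
Proof. by rewrite /corner_coef valK. Qed.

Lemma corner_coef_ge P m (Y : 'M[R]_m) k : (m <= k)%N -> corner_coef P Y k = 0.
Proof. by move=> mk; rewrite /corner_coef insubN // -leqNgt. Qed.

Lemma is_qdet_corner P m th :
  is_qdet (\matrix_(i < m.+1, j < m.+1) P i j) ord_max ord_max th ->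
  exists2 Y : 'M[R]_m, mx_inverse (lead_mx P m) Y & th = corner_qdet P Y.
Proof.
case=> Y [invY ->]; exists Y.
  by congr mx_inverse: invY; apply/matrixP => k l; rewrite !mxE !lift_max.
rewrite !mxE /corner_qdet; congr (_ - _); apply: eq_bigr => k _.
rewrite !mxE corner_coefE lift_max; congr (_ * _).
by apply: eq_bigr => l _; rewrite !mxE lift_max.
Qed.

Lemma sum_corner_coef_mul P m (Y : 'M[R]_m) j :
  Y *m lead_mx P m = 1%:M -> (j < m)%N ->
  \sum_(k < m) corner_coef P Y k * P k j = P m j.
Proof.
move=> YM jm; pose r := \row_(l < m) P m l.
have := congr1 (fun A : 'rV_m => A 0 (Ordinal jm)) (congr1 (mulmx r) YM).
rewrite mulmx1 mulmxA !mxE => <-; apply: eq_bigr => k _.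
by rewrite !mxE corner_coefE; congr (_ * _); apply: eq_bigr => l _; rewrite mxE.
Qed.

Lemma left_kernel_corner_qdet P m (Y : 'M[R]_m) (h : nat -> R) :
  mx_inverse (lead_mx P m) Y ->
  (forall j, (j < m)%N -> \sum_(k < m.+1) h k * P k j = 0) ->
  \sum_(k < m.+1) h k * P k m = h m * corner_qdet P Y.
Proof.
move=> [MY YM] hP.
pose e := \row_(k < m) (h k + h m * corner_coef P Y k).
have eM : e *m lead_mx P m = 0.
  apply/rowP => j; rewrite !mxE.
  under eq_bigr do rewrite !mxE mulrDl -mulrA.
  rewrite big_split /= -mulr_sumr sum_corner_coef_mul //.
  by rewrite -[RHS](hP j) // big_ord_recr.
have e0 : e = 0 by rewrite -[e]mulmx1 -MY mulmxA eM mul0mx.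
have hk (k : 'I_m) : h k = - (h m * corner_coef P Y k).
  apply/eqP; rewrite -addr_eq0.
  by have := congr1 (fun A : 'rV_m => A 0 k) e0; rewrite !mxE => ->.
rewrite big_ord_recr /= mulrBr mulr_sumr addrC -sumrN; congr (_ + _).
by apply: eq_bigr => k _; rewrite hk mulNr mulrA.
Qed.

Section Shift.

Variable d : R -> R.
Hypothesis dD : {morph d : u v / u + v}.
Hypothesis dM : forall u v, d (u * v) = d u * v + u * d v.

Lemma corner_coef_col_shift P m (Y0 : 'M[R]_m) (Y1 : 'M[R]_m.+1) :
  (forall i j, d (P i j) = P i j.+1) ->
  mx_inverse (lead_mx P m) Y0 -> mx_inverse (lead_mx P m.+1) Y1 ->
  d (corner_coef P Y1 m) * corner_qdet P Y0 = corner_qdet P Y1.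
Proof.
move=> dP inv0 [_ YM1].
have dsum j : (j <= m)%N -> \sum_(k < m.+1) d (corner_coef P Y1 k) * P k j
    = P m.+1 j.+1 - \sum_(k < m.+1) corner_coef P Y1 k * P k j.+1.
  move=> jm; have := congr1 d (sum_corner_coef_mul YM1 jm).
  rewrite dP (derivation_sum_mul dD dM _ (corner_coef P Y1) (P^~ j)).
  by under [X in _ + X = _]eq_bigr do rewrite dP; move=> <-; rewrite addrK.
rewrite -(left_kernel_corner_qdet (h := fun k => d (corner_coef P Y1 k))) //.
  by rewrite dsum.
by move=> j jm; rewrite dsum 1?ltnW // sum_corner_coef_mul ?subrr.
Qed.

(* For m = 0 the term corner_coef P Y0 m.-1 is 0, since Y0 is empty. *)
Lemma corner_qdet_row_shift P m (Y0 : 'M[R]_m) (Y1 : 'M[R]_m.+1) :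
  (forall i j, d (P i j) = P i.+1 j) ->
  mx_inverse (lead_mx P m) Y0 -> mx_inverse (lead_mx P m.+1) Y1 ->
  d (corner_qdet P Y0) =
    (corner_coef P Y1 m - corner_coef P Y0 m.-1) * corner_qdet P Y0.
Proof.
move=> dP inv0 [_ YM1]; have [_ YM0] := inv0.
pose b := corner_coef P Y0.
pose g k := d (b k) + (if k is k'.+1 then b k' else 0).
have gsum j : \sum_(k < m.+1) g k * P k j = d (\sum_(k < m) b k * P k j).
  under eq_bigr do rewrite mulrDl.
  rewrite big_split /= (derivation_sum_mul dD dM _ b (P^~ j)); congr (_ + _).
    by rewrite big_ord_recr /= /b corner_coef_ge // derivation0 // mul0r addr0.
  by rewrite big_ord_recl /= mul0r add0r; apply: eq_bigr => k _; rewrite dP.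
have gm : g m = corner_coef P Y0 m.-1.
  have prev : (if m is k.+1 then b k else 0) = b m.-1.
    by case Em: m => [|k] //=; rewrite /b corner_coef_ge ?Em.
  by rewrite /g prev /b corner_coef_ge // derivation0 // add0r.
pose h k := corner_coef P Y1 k - g k.
rewrite -gm -(left_kernel_corner_qdet (h := h)) //.
  under eq_bigr do rewrite mulrBl.
  by rewrite sumrB sum_corner_coef_mul // gsum derivationB // dP.
move=> j jm; under eq_bigr do rewrite mulrBl.
rewrite sumrB gsum sum_corner_coef_mul 1?ltnW //.
by rewrite sum_corner_coef_mul // dP subrr.
Qed.

End Shift.

End CornerQuasideterminant.

Theorem proposition3p12 (F : fieldType) (R : unitAlgType F)
  (dx dy : R -> R) (phi : R) (theta : nat -> R) :
  [pchar F] =i pred0 ->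
  division_ring R ->
  is_derivation dx -> is_derivation dy ->
  (forall u : R, dx (dy u) = dy (dx u)) ->
  (forall m : nat, is_qdet (Theta dx dy phi m) ord_max ord_max (theta m)) ->
  (forall m : nat, theta m \is a GRing.unit) ->
  forall m : nat,
    dy (dx (theta m) * (theta m)^-1) =
      theta m.+1 * (theta m)^-1
      - theta m * (if m is m'.+1 then (theta m')^-1 else 0).
Proof.
move=> _ _ dx_der dy_der dxy qdet_theta theta_unit m.
have [dxD dxM] := (is_derivationD dx_der, is_derivationM dx_der).
have [dyD dyM] := (is_derivationD dy_der, is_derivationM dy_der).
pose P i j := iter i dx (iter j dy phi).
have dxP i j : dx (P i j) = P i.+1 j by [].
have dyP i j : dy (P i j) = P i j.+1.
  by rewrite /P; elim: i => //= i IHi; rewrite -dxy IHi.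
have corner k := is_qdet_corner (P := P) (qdet_theta k).
have [Y0 inv0 th0] := corner m; have [Y1 inv1 th1] := corner m.+1.
rewrite th0 (corner_qdet_row_shift dxD dxM dxP inv0 inv1) -th0.
rewrite mulrK // derivationB // th1.
rewrite -(corner_coef_col_shift dyD dyM dyP inv0 inv1).
rewrite -th0 mulrK //; congr (_ - _).
case: m Y0 inv0 th0 {Y1 inv1 th1} => [|m] Y0 inv0 th0 /=.
  by rewrite corner_coef_ge // derivation0 // mulr0.
have [Y inv th] := corner m.
by rewrite th0 -(corner_coef_col_shift dyD dyM dyP inv inv0) -th mulrK.
Qed.
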